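(* Let $m\ge0$ be an integer and write $s_n=s_n^{(1,m+2)}$. Then for all $n\ge0$ and $j=0,\ldots,m+1$, \[ s_{n(m+2)+j}^2=\delta_{j,0}+(1-\delta_{j,0})s_{j-1}^2+\sum_{k=1}^n\left\{s_{k(m+2)+j-1}^2+2\sum_{i=0}^{(k-1)(m+2)+j}P_{k(m+2)+j-1-i}^{\{-2,-1,m\}}s_i^2\right\}. \]
   Context: For positive integers $p<q$, $s_n^{(p,q)}$ is defined by $s_n^{(p,q)}=\delta_{0,n}+s_{n-p}^{(p,q)}+s_{n-q}^{(p,q)}$ for $n\ge0$ and $s_n^{(p,q)}=0$ for $n<0$. $\delta_{i,j}$ is $1$ if $i=j$ and $0$ otherwise. For a finite set $W$ of integers, $P_n^W$ is the number of permutations $\pi$ of $\{1,\dots,n\}$ with $\pi(i)-i\in W$ for all $i$ (the permanent of the $n\times n$ $(0,1)$ Toeplitz matrix whose $(i,j)$ entry is $1$ iff $j-i\in W$), with $P_0^W=1$. Empty sums are $0$. *)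

From mathcomp Require Import all_boot all_order all_algebra all_fingroup.
Set Implicit Arguments. Unset Strict Implicit. Unset Printing Implicit Defensive.
Import GRing.Theory.

(* s_n^{(p,q)} with s_n = 0 for n < 0; computed with fuel n.+1, which is
   sufficient since p >= 1 makes every recursive call decrease n. *)
Fixpoint s_fuel (p q fuel n : nat) : nat :=
  match fuel with
  | 0 => 0
  | f.+1 => (n == 0) + (if p <= n then s_fuel p q f (n - p) else 0)
                     + (if q <= n then s_fuel p q f (n - q) else 0)
  end.

Definition s (p q n : nat) : nat := s_fuel p q n.+1 n.

Definition Pperm (W : seq int) (n : nat) : nat :=
  #|[set sigma : 'S_n | [forall i : 'I_n, ((sigma i)%:Z - (i : nat)%:Z)%R \in W]]|.

From mathcomp Require Import all_boot all_order all_algebra all_fingroup.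
From mathcomp Require Import zify.
Set Implicit Arguments. Unset Strict Implicit. Unset Printing Implicit Defensive.

(* Squaring s_N = s_(N-1) + s_(N-m-2) reduces the identity, by induction on n,
   to the cross term s_(M+m+1) s_M = sum_(i <= M) P_(M+m+1-i) s_i^2.
   A permutation with displacements in {-2, -1, m} is determined by its jumps
   i -> i + m, and the jump sets that occur for size L + m + 1 are exactly the
   sets 0 = u_0 < ... < u_k = L whose gaps lie in [1, m + 1] with consecutive
   gaps summing to at least m + 2.  Unrolling s_(M+d) s_M along the recurrence
   of s produces, as coefficient of s_i^2, the number of such gap sequences of
   M - i whose first gap is at least m + 2 - d. *)

Lemma s_fuel_enough p q f f' n : 0 < p -> 0 < q -> n < f -> n < f' ->
  s_fuel p q f n = s_fuel p q f' n.
Proof.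
move=> p_gt0 q_gt0; elim: f f' n => [|f IH] [|f'] n //= n_lt_f n_lt_f'.
by congr (_ + _ + _); case: ifP => // le_n; apply: IH; lia.
Qed.

Lemma sE p q n : 0 < p -> 0 < q ->
  s p q n = (n == 0) + (if p <= n then s p q (n - p) else 0)
                     + (if q <= n then s p q (n - q) else 0).
Proof.
move=> p_gt0 q_gt0; rewrite {1}/s /=.
by congr (_ + _ + _); case: ifP => // le_n; apply: s_fuel_enough; lia.
Qed.

Section Recurrence.

Variable m : nat.
Local Notation S := (s 1 (m + 2)).

Lemma sS n : S n.+1 = S n + (if m + 1 <= n then S (n - (m + 1)) else 0).
Proof.
rewrite sE ?addn_gt0 ?orbT // subn1 /= add0n.
rewrite (_ : (m + 2 <= n.+1) = (m + 1 <= n)); last lia.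
by case: ifP => // m_le; rewrite (_ : n.+1 - (m + 2) = n - (m + 1)); lia.
Qed.

Lemma s_small n : n <= m + 1 -> S n = 1.
Proof.
elim: n => [|n IH] n_le; first by rewrite sE ?addn2.
by rewrite sS IH; [case: ifP => //; lia | lia].
Qed.

Lemma s_unroll M d : d <= m + 1 ->
  S (M + d) = S M + \sum_(m + 2 - d <= a < m + 2) (if a <= M then S (M - a) else 0).
Proof.
elim: d => [|d IH] d_le; first by rewrite addn0 subn0 big_geq ?addn0.
rewrite (addnS M d) sS IH; last lia.
rewrite (@big_ltn _ _ _ (m + 2 - d.+1)); last lia.
rewrite (_ : (m + 2 - d.+1).+1 = m + 2 - d); last lia.
rewrite (_ : (m + 1 <= M + d) = (m + 2 - d.+1 <= M)); last lia.
case: ifP => gap_le; last by rewrite addn0.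
by rewrite (_ : M + d - (m + 1) = M - (m + 2 - d.+1)); lia.
Qed.

End Recurrence.

Lemma sum_if_le M a (F : nat -> nat) : a <= M ->
  \sum_(0 <= i < M.+1) (if a <= M - i then F i else 0) = \sum_(0 <= i < (M - a).+1) F i.
Proof.
move=> a_le; rewrite (@big_cat_nat _ _ _ (M - a).+1) //=; last lia.
rewrite [X in _ + X]big_nat_cond [X in _ + X]big1 ?addn0.
  by apply: eq_big_nat => i /andP[_ i_lt]; case: ifP => //; lia.
by move=> i /andP[/andP[i_gt i_lt] _]; case: ifP => // le_a; lia.
Qed.

Definition lead_gap a : seq bool := true :: nseq a.-1 false.

Section Compositions.

Variable m : nat.
Local Notation S := (s 1 (m + 2)).

(* For fuel > L: the words of length L + 1 whose set of true positions is
   0 = u_0 < u_1 < ... < u_k = L, with every gap in [1, m + 1], the first gap at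
   least lo, and any two consecutive gaps summing to at least m + 2. *)
Fixpoint comp_words fuel L lo : seq (seq bool) :=
  if fuel is f.+1 then
    if L == 0 then [:: [:: true]] else
    [seq lead_gap a ++ w | a <- [seq a <- index_iota lo (m + 2) | 0 < a <= L],
                           w <- comp_words f (L - a) (m + 2 - a)]
  else [::].

Lemma comp_wordsS fuel L lo : comp_words fuel.+1 L lo =
  if L == 0 then [:: [:: true]] else
  [seq lead_gap a ++ w | a <- [seq a <- index_iota lo (m + 2) | 0 < a <= L],
                         w <- comp_words fuel (L - a) (m + 2 - a)].
Proof. by []. Qed.

Definition ncomp L lo := size (comp_words L.+1 L lo).

Lemma comp_words_fuel f f' L lo : L < f -> L < f' ->
  comp_words f L lo = comp_words f' L lo.
Proof.
elim: f f' L lo => [|f IH] [|f'] L lo // L_lt_f L_lt_f'.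
rewrite !comp_wordsS; case: eqP => // L_neq0.
rewrite /allpairs_dep; congr flatten; apply/eq_in_map => a.
by rewrite mem_filter => /andP[/andP[a_gt0 _] _]; congr map; apply: IH; lia.
Qed.

Lemma ncompE L lo : ncomp L lo =
  (L == 0) + \sum_(lo <= a < m + 2 | 0 < a <= L) ncomp (L - a) (m + 2 - a).
Proof.
rewrite {1}/ncomp comp_wordsS; case: eqP => [-> | L_neq0].
  by rewrite big1 //; lia.
rewrite size_allpairs_dep sumnE big_map big_filter add0n.
by apply: eq_bigr => a /andP[a_gt0 _]; rewrite (@comp_words_fuel L (L - a).+1) //; lia.
Qed.

Lemma s_mul_shift M d : d <= m + 1 ->
  S (M + d) * S M = \sum_(0 <= i < M.+1) ncomp (M - i) (m + 2 - d) * S i ^ 2.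
Proof.
elim/ltn_ind: M d => M IH d d_le.
rewrite s_unroll // mulnDl big_distrl /=.
under [RHS]eq_bigr => i _ do rewrite ncompE mulnDl big_distrl /=.
rewrite big_split /=; congr (_ + _).
  rewrite big_nat_recr //= subnn mul1n big_nat_cond big1 ?add0n ?mulnn //.
  by move=> i /andP[/andP[_ i_lt] _]; rewrite (_ : M - i == 0 = false) //; lia.
rewrite (exchange_big_dep xpredT) //=.
apply: eq_big_nat => a /andP[a_ge a_lt]; rewrite big_mkcond /=.
case: (leqP a M) => a_le; last by rewrite mul0n big1 // => i _; case: ifP => //; lia.
rewrite -{2}(subnK a_le) mulnC IH; try lia.
rewrite -(sum_if_le _ a_le); apply: eq_bigr => i _.
rewrite (_ : 0 < a <= M - i = (a <= M - i)); last lia.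
by case: ifP => // _; rewrite (_ : M - a - i = M - i - a); lia.
Qed.

End Compositions.

Definition moves_in (W : seq int) n (sg : 'S_n) : bool :=
  [forall i : 'I_n, ((sg i)%:Z - (i : nat)%:Z)%R \in W].

Lemma cut_balance n (sg : 'S_n) c :
  #|[set i : 'I_n | i < c <= sg i]| = #|[set i : 'I_n | c <= i & sg i < c]|.
Proof.
pose A := [set i : 'I_n | i < c]; pose B := [set i : 'I_n | sg i < c].
have cardB : #|B| = #|A|.
  by rewrite -(card_preimset A (@perm_inj _ sg)); apply: eq_card => i; rewrite !inE.
have AB : [set i : 'I_n | i < c <= sg i] = A :\: B.
  by apply/setP => i; rewrite !inE -leqNgt andbC.
have BA : [set i : 'I_n | c <= i & sg i < c] = B :\: A.
  by apply/setP => i; rewrite !inE -leqNgt andbC.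
have := cardsID B A; have := cardsID A B; rewrite AB BA setIC; lia.
Qed.

Section Admissible.

Variable m : nat.

(* The properties shared by the jump sets of the permutations of 'I_N; adm_lo
   bounds the first gap, through which the condition on consecutive gaps
   is passed on when the first gap is removed. *)
Record admissible (N lo : nat) (f : nat -> bool) : Prop := Admissible {
  adm_bound : forall u, f u -> u + m < N;
  adm_cover : forall c, c < N -> ~~ f c -> exists2 u, f u & u < c <= u + m;
  adm_sparse : forall u u' u'', f u -> f u' -> f u'' -> u < u' < u'' -> u + m + 2 <= u'';
  adm_lo : forall u, f u -> 0 < u -> lo <= u }.

Lemma eq_admissible N lo f g : f =1 g -> admissible N lo f -> admissible N lo g.
Proof.
move=> fg [bnd cov sparse lo_le]; split=> [u|c c_lt|u u' u''|u].
- by rewrite -fg; apply: bnd.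
- by rewrite -fg => /(cov c c_lt)[u fu cu]; exists u; rewrite -?fg.
- by rewrite -!fg; apply: sparse.
- by rewrite -fg; apply: lo_le.
Qed.

Lemma admissible0 N lo f : 0 < N -> admissible N lo f -> f 0.
Proof. by move=> N_gt0 [_ cov _ _]; apply/negPn/negP => /(cov 0 N_gt0)[u]. Qed.

End Admissible.

Section Jumps.

Variables m n : nat.
Local Notation W := [:: (-2)%R; (-1)%R; Posz m].

Lemma moves_inP (sg : 'S_n) : moves_in W sg ->
  forall i : 'I_n, [\/ sg i = i + m :> nat, (sg i).+1 = i | (sg i).+2 = i].
Proof.
move=> /forallP sg_ok i; move: (sg_ok i); rewrite !inE.
by case/or3P => /eqP d; [apply: Or33 | apply: Or32 | apply: Or31]; lia.
Qed.

Definition jump (sg : 'S_n) (u : nat) : bool :=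
  [exists i : 'I_n, (i == u :> nat) && (sg i == i + m :> nat)].

Lemma jumpE (sg : 'S_n) (i : 'I_n) : jump sg i = (sg i == i + m :> nat).
Proof.
apply/existsP/idP => [[j /andP[/eqP ji]]|]; last by exists i; rewrite eqxx.
by rewrite (_ : j = i) //; apply: val_inj.
Qed.

Lemma jump_ord (sg : 'S_n) u :
  jump sg u -> exists2 i : 'I_n, i = u :> nat & sg i = u + m :> nat.
Proof. by case/existsP => i /andP[/eqP <- /eqP]; exists i. Qed.

Lemma jump_bound (sg : 'S_n) u : jump sg u -> u + m < n.
Proof. by case/jump_ord => i _ <-. Qed.

Section ValidPerm.

Variable sg : 'S_n.
Hypothesis sg_ok : moves_in W sg.

Lemma jump_cover c : c < n -> ~~ jump sg c -> exists2 u, jump sg u & u < c <= u + m.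
Proof.
move=> c_lt; pose i := Ordinal c_lt; have i_val : (i : nat) = c by [].
move=> not_jump; rewrite -i_val jumpE in not_jump.
have sg_i : sg i < c.
  by case: (moves_inP sg_ok i) => d; [rewrite d eqxx in not_jump | lia | lia].
have : 0 < #|[set i : 'I_n | c <= i & sg i < c]|.
  by apply/card_gt0P; exists i; rewrite inE; apply/andP; split; lia.
rewrite -cut_balance => /card_gt0P[j]; rewrite inE => /andP[j_lt c_le].
by case: (moves_inP sg_ok j) => d; [exists j; rewrite ?jumpE ?d //; lia | lia | lia].
Qed.

Lemma jump_sparse u u' u'' : jump sg u -> jump sg u' -> jump sg u'' -> u < u' < u'' ->
  u + m + 2 <= u''.
Proof.
move=> /jump_ord[i <- sg_i] /jump_ord[i' <- sg_i'] /jump_ord[i'' <- sg_i''].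
move=> /andP[lt_ii' lt_i'i''].
rewrite leqNgt; apply/negP => close.
pose D := [set j : 'I_n | i'' <= j & sg j < i''].
have D_next j : j \in D -> j = i''.+1 :> nat /\ (sg j).+1 = i''.
  rewrite inE => /andP[le_j lt_sg]; have j_ne : (j : nat) != i''.
    by apply: contraTneq lt_sg => /val_inj ->; rewrite sg_i''; lia.
  by case: (moves_inP sg_ok j) => d; lia.
have D_gt0 : 0 < #|D|.
  by rewrite -cut_balance; apply/card_gt0P; exists i'; rewrite inE; apply/andP; split; lia.
case: (leqP i'' (i + m)) => [le_i''|gt_i''].
  have : 1 < #|D|.
    rewrite -cut_balance; apply/card_gt1P; exists i, i'; rewrite !inE.
    split; try by apply/andP; split; lia.
    by apply: contraTneq lt_ii' => ->; rewrite ltnn.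
  case/card_gt1P => j [j' [Dj Dj' /eqP[]]]; apply: val_inj.
  by have [j_val _] := D_next _ Dj; have [j'_val _] := D_next _ Dj'; rewrite /= j_val j'_val.
case/card_gt0P: D_gt0 => j /D_next[j_val sg_j].
have /perm_inj ji : sg j = sg i by apply: val_inj => /=; rewrite sg_i; lia.
by move: j_val; rewrite ji; lia.
Qed.

Lemma jumps_admissible : admissible m n 1 (jump sg).
Proof.
split=> // [u|c|u u' u'' ju ju' ju''].
- exact: jump_bound.
- exact: jump_cover.
- exact: jump_sparse.
Qed.

End ValidPerm.

Lemma moves_in_drop2 (sg tau : 'S_n) (i : 'I_n) : moves_in W tau ->
  (forall j : 'I_n, j < i -> sg j = tau j) -> (sg i).+2 = i -> (tau i).+2 = i.
Proof.
move=> tau_ok agree sg_i; pose j := (tau^-1)%g (sg i).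
have tau_j : tau j = sg i by rewrite permKV.
case: (ltngtP j i) => [lt_ji|lt_ij|/val_inj ji]; last by move: tau_j; rewrite ji => ->.
- by move: (agree j lt_ji); rewrite tau_j => /perm_inj ji; rewrite ji ltnn in lt_ji.
- by case: (moves_inP tau_ok j); rewrite tau_j; lia.
Qed.

Lemma moves_in_jump_inj (sg tau : 'S_n) : moves_in W sg -> moves_in W tau ->
  jump sg =1 jump tau -> sg = tau.
Proof.
move=> sg_ok tau_ok same_jumps.
suff agree k (i : 'I_n) : i < k -> sg i = tau i by apply/permP => i; apply: (agree i.+1).
elim: k i => [|k IH] i //; rewrite ltnS leq_eqVlt => /orP[/eqP i_k|]; last exact: IH.
have below (j : 'I_n) : j < i -> sg j = tau j by move=> lt_ji; apply: IH; lia.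
have below' (j : 'I_n) : j < i -> tau j = sg j by move=> /below ->.
have := same_jumps i; rewrite !jumpE => jump_i; apply: val_inj => /=.
have d := moves_in_drop2 tau_ok below; have d' := moves_in_drop2 sg_ok below'.
move: jump_i; case: eqP => jump_sg; case: eqP => jump_tau // _;
  by case: (moves_inP sg_ok i) => ds; case: (moves_inP tau_ok i) => dt; lia.
Qed.

Section Construction.

Variables (lo : nat) (f : nat -> bool).
Hypothesis f_adm : admissible m n lo f.

Definition two_jumps_over c :=
  [exists u : 'I_c, exists u' : 'I_c, [&& u < u', c <= u + m, f u & f u']].

Lemma two_jumps_overP c :
  reflect (exists u u', [/\ u < u' < c, c <= u + m, f u & f u']) (two_jumps_over c).
Proof.
apply: (iffP existsP) => [[u /existsP[u' /and4P[lt_uu' c_le fu fu']]]|].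
  by exists u, u'; split=> //; rewrite lt_uu' /=.
case=> u [u' [lt c_le fu fu']].
have [u_lt u'_lt] : u < c /\ u' < c by lia.
exists (Ordinal u_lt); apply/existsP; exists (Ordinal u'_lt); apply/and4P; split=> //=; lia.
Qed.

(* A non-jump c moves down by 2 exactly when c - 1 is already taken: either
   by the jump c - 1 - m, or, when two jumps cross the cut at c, by c + 1. *)
Definition drops2 c := two_jumps_over c || (m < c) && f (c - m - 1).

Definition target c := if f c then c + m else if drops2 c then c - 2 else c - 1.

Lemma drops2_gt1 c : c < n -> ~~ f c -> drops2 c -> 1 < c.
Proof.
move=> c_lt not_fc; have [u fu /andP[u_lt c_le]] := adm_cover f_adm c_lt not_fc.
by case/orP => [/two_jumps_overP[v [v' [/andP[? ?] _ _ _]]]|/andP[? _]]; lia.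
Qed.

Lemma target_lt c : c < n -> target c < n.
Proof.
rewrite /target; case: ifP => [/(adm_bound f_adm)//|_ c_lt]; by case: ifP; lia.
Qed.

Lemma target_down c : c < n -> ~~ f c -> (target c).+1 = c \/ (target c).+2 = c.
Proof.
move=> c_lt not_fc; have [u _ /andP[u_lt _]] := adm_cover f_adm c_lt not_fc.
rewrite /target (negbTE not_fc); case: ifP => [/(drops2_gt1 c_lt not_fc)|_]; lia.
Qed.

Lemma target_jump_neq c c' : f c -> c' < n -> ~~ f c' -> target c != target c'.
Proof.
move=> fc c'_lt not_fc'; rewrite {1}/target fc.
have [u fu /andP[u_lt c'_le]] := adm_cover f_adm c'_lt not_fc'.
rewrite /target /drops2 (negbTE not_fc'); apply/eqP; case: ifP => [/orP[]|/norP[_ no_jump]].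
- by case/two_jumps_overP => v [v' [/andP[? ?] ? fv fv']] e;
    have := adm_sparse f_adm fc fv fv'; lia.
- case/andP => lt_m fc'm e; have c'm : c' - m - 1 = c + 1 by lia.
  by rewrite c'm in fc'm; have := adm_sparse f_adm fc fc'm fu; lia.
- by move=> e; move: no_jump; rewrite (_ : c' - m - 1 = c) ?fc ?andbT; lia.
Qed.

Lemma target_nonjump_neq c c' : c < c' < n -> ~~ f c -> ~~ f c' -> target c != target c'.
Proof.
move=> /andP[lt_cc' c'_lt] not_fc not_fc'; have c_lt : c < n by lia.
have [u fu /andP[u_lt c_le]] := adm_cover f_adm c_lt not_fc.
have [u' fu' /andP[u'_lt c'_le]] := adm_cover f_adm c'_lt not_fc'.
have gt1 := drops2_gt1 c_lt not_fc; have gt1' := drops2_gt1 c'_lt not_fc'.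
rewrite /target (negbTE not_fc) (negbTE not_fc'); apply/eqP.
case: ifP => [/gt1 ?|no_drop]; case: ifP => [/[dup] /gt1' ? drop'|_]; try lia.
move=> e; move/negP: no_drop; apply; move: drop'; rewrite /drops2.
case/orP => [/two_jumps_overP[v [v' [/andP[lt_vv' v'_lt] c'_le' fv fv']]]|/andP[lt_m fc'm]].
- have v'_ne : v' != c by apply: contraNneq not_fc => <-.
  by apply/orP; left; apply/two_jumps_overP; exists v, v'; split=> //; lia.
- have u'_ne : u' != c by apply: contraNneq not_fc => <-.
  apply/orP; left; apply/two_jumps_overP; exists (c - m), u'; split=> //; try lia.
  by rewrite (_ : c - m = c' - m - 1) //; lia.
Qed.

Lemma target_inj c c' : c < n -> c' < n -> target c = target c' -> c = c'.
Proof.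
wlog lt_cc' : c c' / c < c'.
  move=> wl c_lt c'_lt e; case: (ltngtP c c') => [lt|lt|//]; first exact: wl.
  by apply/esym; apply: wl.
move=> c_lt c'_lt /eqP; case fc: (f c); case fc': (f c').
- by rewrite /target fc fc' eqn_add2r => /eqP.
- by rewrite (negbTE (target_jump_neq fc c'_lt (negbT fc'))).
- by rewrite eq_sym (negbTE (target_jump_neq fc' c_lt (negbT fc))).
- by rewrite (negbTE (target_nonjump_neq _ (negbT fc) (negbT fc'))) //; apply/andP.
Qed.

Definition target_ord (i : 'I_n) : 'I_n := Ordinal (target_lt (ltn_ord i)).

Lemma target_ord_inj : injective target_ord.
Proof. by move=> i j /(congr1 val) /(target_inj (ltn_ord i) (ltn_ord j)) /val_inj. Qed.

Definition perm_of_jumps : 'S_n := perm target_ord_inj.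

Lemma perm_of_jumpsE (i : 'I_n) : perm_of_jumps i = target i :> nat.
Proof. by rewrite permE. Qed.

Lemma perm_of_jumps_moves_in : moves_in W perm_of_jumps.
Proof.
apply/forallP => i; rewrite !inE perm_of_jumpsE.
case fi: (f i); first by rewrite /target fi; apply/or3P; apply: Or33; apply/eqP; lia.
by case: (target_down (ltn_ord i) (negbT fi)) => d; apply/or3P;
  [apply: Or32 | apply: Or31]; apply/eqP; lia.
Qed.

Lemma jump_perm_of_jumps : jump perm_of_jumps =1 f.
Proof.
move=> u; case: (ltnP u n) => [u_lt|u_ge].
  rewrite -[u]/(val (Ordinal u_lt)) jumpE perm_of_jumpsE /=.
  case fu: (f u); first by rewrite /target fu eqxx.
  by apply/eqP; case: (target_down u_lt (negbT fu)); lia.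
case fu: (f u); first by have := adm_bound f_adm fu; lia.
by apply/negbTE/negP => /jump_bound; lia.
Qed.

End Construction.

End Jumps.

Lemma size_lead_gap a : 0 < a -> size (lead_gap a) = a.
Proof. by case: a => // a _; rewrite /= size_nseq. Qed.

Lemma nth_lead_gap_cat a w u : 0 < a ->
  nth false (lead_gap a ++ w) u = if u < a then u == 0 else nth false w (u - a).
Proof.
move=> a_gt0; rewrite nth_cat size_lead_gap //; case: ifP => // _.
by case: u => //= u; rewrite nth_nseq; case: ifP.
Qed.

Lemma lead_gap_cat_inj a b w w' : 0 < a -> 0 < b -> nth false w 0 -> nth false w' 0 ->
  lead_gap a ++ w = lead_gap b ++ w' -> a = b /\ w = w'.
Proof.
move=> a_gt0 b_gt0 w0 w'0 e.
have nth_e u : nth false (lead_gap a ++ w) u = nth false (lead_gap b ++ w') u by rewrite e.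
have ab : a = b.
  case: (ltngtP a b) => // [lt|lt]; [move: (nth_e a) | move: (nth_e b)];
    rewrite !nth_lead_gap_cat // ltnn subnn ?w0 ?w'0 lt; lia.
by split=> //; move/(congr1 (drop a)): e; rewrite {2}ab !drop_size_cat ?size_lead_gap.
Qed.

Section Words.

Variable m : nat.

Lemma admissible_lead_gap L a lo w : 0 < a <= m + 1 -> lo <= a ->
  admissible m (L + m + 1) (m + 2 - a) (nth false w) ->
  admissible m (L + a + m + 1) lo (nth false (lead_gap a ++ w)).
Proof.
move=> /andP[a_gt0 a_le] lo_le [bnd cov sparse lo_w].
pose g u := if u < a then u == 0 else nth false w (u - a).
apply: (@eq_admissible _ _ _ g) => [u|]; first by rewrite nth_lead_gap_cat.
have g_pos v : g v -> 0 < v -> a <= v /\ nth false w (v - a).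
  by rewrite /g; case: ifP => [_ /eqP -> //|/negbT v_ge wv _]; split=> //; lia.
split=> [u|c c_lt|u u' u'' gu gu' gu'' /andP[lt lt']|u gu u_gt0].
- by rewrite /g; case: ifP => [_ /eqP ->|/negbT u_ge /bnd]; lia.
- rewrite /g; case: ifP => [c_lt_a c_ne0|/negbT c_ge not_wc].
    by exists 0; [rewrite a_gt0 | lia].
  have [|u wu /andP[u_lt c_le]] := cov (c - a) _ not_wc; first lia.
  by exists (u + a); rewrite ?ltnNge ?leq_addl ?addnK //=; lia.
- have [u'_ge wu'] := g_pos _ gu' ltac:(lia).
  have [u''_ge wu''] := g_pos _ gu'' ltac:(lia).
  case: (posnP u) => [u0|u_gt0]; first by have := lo_w _ wu'' ltac:(lia); lia.
  by have [u_ge wu] := g_pos _ gu u_gt0; have := sparse _ _ _ wu wu' wu''; lia.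
- by have [u_ge _] := g_pos _ gu u_gt0; lia.
Qed.

Lemma admissible_first_gap N lo F : m + 1 < N -> admissible m N lo F ->
  exists a, [/\ 0 < a, lo <= a <= m + 1, F a & forall u, 0 < u < a -> ~~ F u].
Proof.
move=> N_gt F_adm; have [_ cov _ lo_F] := F_adm.
have early : exists2 u, F u & 0 < u <= m + 1.
  case Fm: (F (m + 1)); first by exists (m + 1) => //; lia.
  by have [u Fu /andP[? ?]] := cov _ N_gt (negbT Fm); exists u; last lia.
have ex : exists u, (0 < u) && F u.
  by case: early => u Fu /andP[? _]; exists u; rewrite Fu andbT.
case: (ex_minnP ex) => a /andP[a_gt0 Fa] a_min; exists a; split=> //.
- case: early => u Fu /andP[u_gt0 u_le]; have := a_min u; rewrite u_gt0 Fu.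
  by have := lo_F _ Fa a_gt0; lia.
- by move=> u /andP[u_gt0 u_lt]; apply/negP => Fu; have := a_min u; rewrite u_gt0 Fu; lia.
Qed.

Lemma admissible_drop N lo F a : admissible m N lo F -> 0 < a -> F a ->
  (forall u, 0 < u < a -> ~~ F u) -> admissible m (N - a) (m + 2 - a) (fun u => F (a + u)).
Proof.
move=> F_adm a_gt0 Fa gap; have [bnd cov sparse _] := F_adm.
have F0 : F 0 by apply: admissible0 F_adm; have := bnd _ Fa; lia.
split=> [u /bnd|c c_lt not_Fc|u u' u'' Fu Fu' Fu'' lt|u Fu u_gt0]; try lia.
- have [|u Fu /andP[u_lt c_le]] := cov (a + c) _ not_Fc; first lia.
  case: (leqP a u) => [a_le|u_lt_a].
    by exists (u - a); rewrite ?subnKC //; lia.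
  have u0 : u = 0 by apply/eqP; apply: contraTT Fu => u_ne0; apply: gap; lia.
  have c_gt0 : 0 < c by case: posnP not_Fc => // ->; rewrite addn0 Fa.
  by exists 0; rewrite ?addn0 //; lia.
- by have := sparse _ _ _ Fu Fu' Fu''; lia.
- by have := sparse _ _ _ F0 Fa Fu; lia.
Qed.

Lemma comp_words_head fuel L lo w : w \in comp_words m fuel L lo -> nth false w 0.
Proof.
case: fuel => [|fuel] //; rewrite comp_wordsS; case: eqP => _; first by rewrite inE => /eqP ->.
case/allpairsPdep => a [w' [/[!mem_filter]/andP[/andP[a_gt0 _] _] _ ->]].
by rewrite nth_lead_gap_cat // a_gt0.
Qed.

Lemma comp_words_uniq fuel L lo : uniq (comp_words m fuel L lo).
Proof.
elim: fuel L lo => [|fuel IH] L lo //; rewrite comp_wordsS; case: eqP => // _.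
apply: allpairs_uniq_dep => [||[a w] [b w']]; first by rewrite filter_uniq ?iota_uniq.
  by move=> a _; exact: IH.
move=> /allpairsPdep[a1 [w1 [/[!mem_filter]/andP[/andP[a_gt0 _] _] w1_in [-> ->]]]].
move=> /allpairsPdep[b1 [w2 [/[!mem_filter]/andP[/andP[b_gt0 _] _] w2_in [-> ->]]]] /=.
have w1_0 := comp_words_head w1_in; have w2_0 := comp_words_head w2_in.
by case/lead_gap_cat_inj => // -> ->.
Qed.

Lemma admissible_single lo : admissible m (m + 1) lo (nth false [:: true]).
Proof.
have nth1 u : nth false [:: true] u = (u == 0) by case: u => // u; rewrite /= nth_nil.
split=> [u|c c_lt|u u' u''|u]; rewrite ?nth1.
- by move/eqP ->; lia.
- by move=> c_ne0; exists 0; rewrite ?nth1 //; lia.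
- by move=> /eqP -> /eqP -> /eqP ->.
- by move/eqP ->.
Qed.

Lemma comp_words_admissible fuel L lo w : L < fuel -> w \in comp_words m fuel L lo ->
  size w = L.+1 /\ admissible m (L + m + 1) lo (nth false w).
Proof.
elim: fuel L lo w => [//|fuel IH] L lo w L_lt.
rewrite comp_wordsS; case: eqP => [-> | L_ne0].
  by rewrite inE => /eqP ->; split; last exact: admissible_single.
case/allpairsPdep => a [w' [a_in w'_in ->]]; move: a_in.
rewrite mem_filter mem_index_iota => /andP[/andP[a_gt0 a_le] /andP[lo_le a_lt]].
have [size_w' adm_w'] := IH (L - a) _ _ ltac:(lia) w'_in.
split; first by rewrite size_cat size_lead_gap // size_w'; lia.
rewrite -(subnK a_le); apply: admissible_lead_gap => //; lia.
Qed.

Lemma admissible_comp_words fuel L lo w : L < fuel -> size w = L.+1 ->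
  admissible m (L + m + 1) lo (nth false w) -> w \in comp_words m fuel L lo.
Proof.
elim: fuel L lo w => [//|fuel IH] L lo w L_lt size_w w_adm; rewrite comp_wordsS.
have w0 : nth false w 0 by apply: admissible0 w_adm; lia.
case: eqP => [L0 | L_ne0].
  by move: size_w w0; rewrite L0 inE; case: w w_adm => [|b [|]] //= _ _ ->.
have [|a [a_gt0 /andP[lo_le a_le] wa gap]] := admissible_first_gap _ w_adm; first lia.
have a_L : a <= L by have := adm_bound w_adm wa; lia.
have take_w : take a w = lead_gap a.
  apply: (@eq_from_nth _ false); first by rewrite size_takel ?size_lead_gap //; lia.
  move=> u; rewrite size_takel; last lia.
  move=> u_lt; rewrite nth_take // -[lead_gap a]cats0 nth_lead_gap_cat // u_lt.
  by case: posnP => [->|u_gt0] //; apply/negbTE/gap; lia.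
rewrite -(cat_take_drop a w) take_w; apply/allpairsPdep; exists a, (drop a w); split=> //.
  by rewrite mem_filter mem_index_iota; apply/andP; split; lia.
apply: IH; first lia.
  by rewrite size_drop size_w; lia.
apply: (@eq_admissible _ _ _ (fun u => nth false w (a + u))) => [u|]; first by rewrite nth_drop.
rewrite (_ : L - a + m + 1 = L + m + 1 - a); last lia.
exact: admissible_drop w_adm a_gt0 wa gap.
Qed.

End Words.

Lemma Pperm_ncomp m L : Pperm [:: (-2 : int)%R; (-1 : int)%R; Posz m] (L + m + 1) = ncomp m L 1.
Proof.
set N := L + m + 1; pose word (sg : 'S_N) := mkseq (jump m sg) L.+1.
have nth_word sg u : nth false (word sg) u = jump m sg u.
  case: (ltnP u L.+1) => u_lt; first by rewrite nth_mkseq.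
  by rewrite nth_default ?size_mkseq //; apply/esym/negbTE/negP => /jump_bound; lia.
rewrite /Pperm cardE /ncomp -(size_map word); apply: perm_size; apply: uniq_perm.
- rewrite map_inj_in_uniq ?enum_uniq // => sg tau; rewrite !mem_enum !inE => sg_ok tau_ok e.
  by apply: moves_in_jump_inj sg_ok tau_ok _ => u; rewrite -!nth_word e.
- exact: comp_words_uniq.
move=> w; apply/mapP/idP => [[sg] | w_in].
  rewrite mem_enum inE => sg_ok ->; apply: admissible_comp_words; rewrite ?size_mkseq //.
  by apply: eq_admissible (jumps_admissible sg_ok) => u; rewrite nth_word.
have [size_w w_adm] := comp_words_admissible (ltnSn L) w_in.
exists (perm_of_jumps w_adm); first by rewrite mem_enum inE; exact: perm_of_jumps_moves_in.
apply: (@eq_from_nth _ false); first by rewrite size_mkseq.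
by move=> u _; rewrite nth_word jump_perm_of_jumps.
Qed.

Lemma s_sq_step m N : m + 2 <= N ->
  s 1 (m + 2) N ^ 2 = s 1 (m + 2) (N - (m + 2)) ^ 2 + (s 1 (m + 2) (N - 1) ^ 2
    + 2 * \sum_(0 <= i < (N - (m + 2)).+1)
        Pperm [:: (-2 : int)%R; (-1 : int)%R; Posz m] (N - 1 - i) * s 1 (m + 2) i ^ 2).
Proof.
move=> N_ge; set M := N - (m + 2).
have N_eq : N = (M + (m + 1)).+1 by rewrite /M; lia.
have s_N : s 1 (m + 2) N = s 1 (m + 2) (N - 1) + s 1 (m + 2) M.
  by rewrite N_eq sS subn1 /= leq_addl addnK.
have cross := s_mul_shift M (leqnn (m + 1)).
rewrite (_ : m + 2 - (m + 1) = 1) in cross; last lia.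
rewrite [in RHS](eq_big_nat _ _ (F2 := fun i => ncomp m (M - i) 1 * s 1 (m + 2) i ^ 2)).
  by rewrite -cross s_N (_ : N - 1 = M + (m + 1)); [nia | lia].
move=> i /andP[_ i_le]; rewrite (_ : N - 1 - i = M - i + m + 1) ?Pperm_ncomp //; lia.
Qed.

Theorem mainTheorem8 (m n j : nat) (hj : j <= m + 1) :
  s 1 (m + 2) (n * (m + 2) + j) ^ 2 =
    (j == 0) + (1 - (j == 0)) * s 1 (m + 2) (j - 1) ^ 2
    + \sum_(1 <= k < n.+1)
        (s 1 (m + 2) (k * (m + 2) + j - 1) ^ 2
         + 2 * \sum_(0 <= i < ((k - 1) * (m + 2) + j).+1)
                 Pperm [:: (-2 : int)%R; (-1 : int)%R; Posz m] (k * (m + 2) + j - 1 - i)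
                 * s 1 (m + 2) i ^ 2).
Proof.
elim: n => [|n IH].
  rewrite big_geq // addn0 mul0n add0n s_small //.
  by case: j hj => [|j] j_le //=; rewrite subn0 mul1n s_small //; lia.
rewrite big_nat_recr //= addnA -IH s_sq_step; last lia.
by rewrite (_ : n.+1 * (m + 2) + j - (m + 2) = n * (m + 2) + j) ?subn1 //; lia.
Qed.
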